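(* Let $A$ be a commutative ring. Assume that the maximal spectrum $\mathrm{Max}(A)$ is a Noetherian topological space and that $\dim \mathrm{Max}(A)\le d-2$. Then $A$ satisfies the absolute flexible stable rank condition $\mathrm{AFSR}_d$.
   Context: Here $\dim\mathrm{Max}(A)$ is the dimension of the maximal spectrum of $A$, i.e. the supremum of the lengths of chains of prime ideals each of which coincides with its Jacobson radical (an intersection of maximal ideals). A commutative ring $A$ satisfies $\mathrm{AFSR}_d$ if for any row $(b_1,\ldots,b_d)$ with coordinates in $A$, there exists $c_1\in A$ such that for any invertible $\varepsilon_1\in A^*$ there exists $c_2\in A$ such that for any $\varepsilon_2\in A^*$, $\ldots$, there exists $c_{d-1}\in A$ such that for any $\varepsilon_{d-1}\in A^*$, every maximal ideal of $A$ containing the ideal $\langle b_1+\varepsilon_1c_1b_d,\ldots,b_{d-1}+\varepsilon_{d-1}c_{d-1}b_d\rangle$ already contains the ideal $\langle b_1,\ldots,b_d\rangle$. *)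

(* Commutative rings = comPzRingType (the zero ring allowed). *)
From mathcomp Require Import all_boot all_order all_algebra.
Set Implicit Arguments. Unset Strict Implicit. Unset Printing Implicit Defensive.
Import GRing.Theory.
Local Open Scope ring_scope.

Section Defs.
Variable A : comPzRingType.

Definition subsetA (I J : A -> Prop) : Prop := forall x, I x -> J x.

Definition is_ideal (I : A -> Prop) : Prop :=
  [/\ I 0, (forall x y, I x -> I y -> I (x + y)) & (forall a x, I x -> I (a * x))].

Definition gen_ideal (S : A -> Prop) : A -> Prop :=
  fun x => forall I, is_ideal I -> subsetA S I -> I x.

Definition is_maximal_ideal (M : A -> Prop) : Prop :=
  [/\ is_ideal M, ~ M 1 &
      forall J, is_ideal J -> subsetA M J -> ~ J 1 -> subsetA J M].

Definition is_prime_ideal (P : A -> Prop) : Prop :=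
  [/\ is_ideal P, ~ P 1 & forall a b, P (a * b) -> P a \/ P b].

Definition jacobson_radical (I : A -> Prop) : A -> Prop :=
  fun x => forall M, is_maximal_ideal M -> subsetA I M -> M x.

(* prime ideals coinciding with their Jacobson radical (points of j-Spec) *)
Definition is_jprime (P : A -> Prop) : Prop :=
  is_prime_ideal P /\ (forall x, P x <-> jacobson_radical P x).

Definition strict_subsetA (I J : A -> Prop) : Prop :=
  subsetA I J /\ exists x, J x /\ ~ I x.

Definition jprime_chain (P : nat -> A -> Prop) (k : nat) : Prop :=
  (forall i, (i <= k)%N -> is_jprime (P i)) /\
  (forall i, (i < k)%N -> strict_subsetA (P i) (P i.+1)).

(* dim Max(A) <= d - 2 (in Z, sup of the empty set being -oo):
   every chain of j-primes has length k with k <= d - 2, i.e. k + 2 <= d. *)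
Definition dimMax_le_sub2 (d : nat) : Prop :=
  forall P k, jprime_chain P k -> (k + 2 <= d)%N.

(* Zariski topology on Max(A): closed sets are V(S) = {M maximal | S ⊆ M}.
   Sets of points of Max(A) are predicates on subsets of A. *)
Definition max_closed (C : (A -> Prop) -> Prop) : Prop :=
  exists S : A -> Prop,
    forall M, C M <-> (is_maximal_ideal M /\ subsetA S M).

Definition max_noetherian : Prop :=
  forall C : nat -> (A -> Prop) -> Prop,
    (forall n, max_closed (C n)) ->
    (forall n M, C n.+1 M -> C n M) ->
    exists N, forall n, (N <= n)%N -> forall M, C n M <-> C N M.

Definition is_unit (e : A) : Prop := exists f, e * f = 1.

(* The game defining AFSR_d.  [row] is the set {b_1,...,b_d}, [bd] = b_d,
   [rest] the b_i still to be treated, [acc] the elements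
   b_i + eps_i c_i b_d already produced. *)
Fixpoint afsr_game (row : A -> Prop) (bd : A) (rest acc : seq A) : Prop :=
  match rest with
  | [::] => forall M, is_maximal_ideal M ->
              subsetA (gen_ideal (fun x => x \in acc)) M ->
              subsetA (gen_ideal row) M
  | b :: rest' => exists c : A, forall e : A, is_unit e ->
              afsr_game row bd rest' (rcons acc (b + e * c * bd))
  end.

Definition AFSR (d : nat) : Prop :=
  forall (bs : seq A) (bd : A), size bs = d.-1 ->
    afsr_game (fun x => x \in rcons bs bd) bd bs [::].

End Defs.

From mathcomp Require Import all_boot all_order all_algebra.
From mathcomp Require Import ring zify.
From Stdlib Require Import Classical ClassicalEpsilon.

Set Implicit Arguments. Unset Strict Implicit. Unset Printing Implicit Defensive.
Import GRing.Theory.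
Local Open Scope ring_scope.

(* Play the game keeping the invariant that every j-prime containing the
   elements b_i + e_i c_i b_d produced so far, but not b_d, tops a chain of
   j-primes whose length is the number of rounds played.  Since Max(A) is
   Noetherian, the j-primes over a set are dominated by finitely many pairwise
   incomparable ones Q_k; by prime avoidance choose c_i outside exactly those
   Q_k that contain b_i.  Then b_i + e c_i b_d lies in no Q_k avoiding b_d, so
   every round lengthens the chains by one.  After d - 1 rounds a maximal ideal
   containing the produced elements but not b_d would top a chain of length
   d - 1, which dim Max(A) <= d - 2 forbids; so it contains b_d, hence every
   b_i. *)

(* A finite family Q_0, ..., Q_(m-1) of subsets of T is encoded as a pair
   [m], [Q : nat -> T -> Prop]; the values [Q k] for [k >= m] are ignored. *)
Section Families.
Variable T : Type.
Implicit Types (C D : T -> Prop) (Q : nat -> T -> Prop).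

Definition subset_of C D := forall x, C x -> D x.

Definition strict_subset C D := subset_of C D /\ exists x, D x /\ ~ C x.

Definition dominated m Q C := exists k, (k < m)%N /\ subset_of (Q k) C.

Definition pairwise_incomparable m Q :=
  forall j k, (j < m)%N -> (k < m)%N -> j <> k -> ~ subset_of (Q j) (Q k).

Definition catf m1 Q1 Q2 k := if (k < m1)%N then Q1 k else Q2 (k - m1)%N.

Lemma not_subset_exists C D : ~ subset_of C D -> exists x, C x /\ ~ D x.
Proof.
move=> notCD; apply: NNPP => none; apply: notCD => x Cx.
by apply: NNPP => nDx; apply: none; exists x.
Qed.

Lemma catf_ind (R : (T -> Prop) -> Prop) m1 m2 Q1 Q2 :
  (forall k, (k < m1)%N -> R (Q1 k)) -> (forall k, (k < m2)%N -> R (Q2 k)) ->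
  forall k, (k < m1 + m2)%N -> R (catf m1 Q1 Q2 k).
Proof.
move=> R1 R2 k k_lt; rewrite /catf.
by case: ifP => k_m1; [apply: R1 | apply: R2; lia].
Qed.

Lemma dominated_catf m1 m2 Q1 Q2 C :
  dominated m1 Q1 C \/ dominated m2 Q2 C -> dominated (m1 + m2) (catf m1 Q1 Q2) C.
Proof.
case=> -[k [k_lt sub]]; [exists k | exists (m1 + k)%N]; rewrite /catf.
  by rewrite k_lt; split=> //; apply: ltn_addr.
by rewrite ltn_add2l ifF ?addKn //; lia.
Qed.

Lemma dominated_skip m Q j k C :
  (j < m.+1)%N -> (k < m.+1)%N -> j <> k -> subset_of (Q j) (Q k) ->
  dominated m.+1 Q C -> dominated m (Q \o bump k) C.
Proof.
move=> j_lt k_lt j_k sub_jk [t [t_lt sub_t]].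
have [t' [t'_lt t'_k sub_t']] :
    exists t', [/\ (t' < m.+1)%N, t' <> k & subset_of (Q t') C].
  case: (eqVneq t k) => [t_k | /eqP t_k]; last by exists t.
  by exists j; split=> // x /sub_jk; rewrite -t_k; apply: sub_t.
exists (unbump k t'); split; first by rewrite /unbump; lia.
by rewrite /= unbumpK // inE; apply/eqP.
Qed.

Lemma prune_family (R : (T -> Prop) -> Prop) m Q :
  (forall k, (k < m)%N -> R (Q k)) ->
  exists m' Q', [/\ forall k, (k < m')%N -> R (Q' k),
    forall C, dominated m Q C -> dominated m' Q' C
    & pairwise_incomparable m' Q'].
Proof.
elim: m Q => [|m IH] Q RQ; first by exists 0%N, Q; split.
case: (classic (pairwise_incomparable m.+1 Q)) => [inc | not_inc].
  by exists m.+1, Q.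
have [j [k [j_lt k_lt j_k sub_jk]]] :
    exists j k, [/\ (j < m.+1)%N, (k < m.+1)%N, j <> k & subset_of (Q j) (Q k)].
  apply: NNPP => none; apply: not_inc => j k j_lt k_lt j_k sub_jk.
  by apply: none; exists j, k.
have [|m' [Q' [RQ' dom inc]]] := IH (Q \o bump k).
  by move=> i i_lt; apply: RQ; rewrite /bump; lia.
exists m', Q'; split=> // C /(dominated_skip j_lt k_lt j_k sub_jk); exact: dom.
Qed.

Section NoetherianInduction.
Variable closed : (T -> Prop) -> Prop.
Hypothesis dcc : forall C : nat -> T -> Prop,
  (forall n, closed (C n)) -> (forall n x, C n.+1 x -> C n x) ->
  exists N, forall n, (N <= n)%N -> forall x, C n x <-> C N x.

Lemma noetherian_ind (Phi : (T -> Prop) -> Prop) :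
  (forall C, closed C ->
     (forall D, closed D -> strict_subset D C -> Phi D) -> Phi C) ->
  forall C, closed C -> Phi C.
Proof.
move=> IH C0 C0_closed; apply: NNPP => notPhi0.
pose bad C D := [/\ closed D, strict_subset D C & ~ Phi D].
have bad_next C : closed C -> ~ Phi C -> exists D, bad C D.
  move=> C_closed notPhi; apply: NNPP => no_bad; apply/notPhi/IH => // D D_cl D_sub.
  by apply: NNPP => notPhiD; apply: no_bad; exists D.
pose next C := epsilon (inhabits C) (bad C).
have next_bad C : closed C -> ~ Phi C -> bad C (next C).
  by move=> C_cl notPhi; apply: epsilon_spec; apply: bad_next.
pose chain n := iter n next C0.
have chain_bad n : closed (chain n) /\ ~ Phi (chain n).
  by elim: n => [|n [cl notPhi]] //=; have [] := next_bad _ cl notPhi.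
have chain_step n : bad (chain n) (chain n.+1).
  by have [cl notPhi] := chain_bad n; apply: next_bad.
have chain_desc n x : chain n.+1 x -> chain n x.
  by case: (chain_step n) => _ [sub _] _; apply: sub.
have [N stable] := dcc (fun n => (chain_bad n).1) chain_desc.
have [_ [_ [x [xN notxN1]]] _] := chain_step N.
by apply/notxN1/(stable N.+1 (leqnSn N)).
Qed.

End NoetherianInduction.
End Families.

Section JSpectrum.
Variable A : comPzRingType.
Implicit Types (I M P S : A -> Prop) (C : (A -> Prop) -> Prop) (Q : nat -> A -> Prop).

Lemma ideal0 I : is_ideal I -> I 0.
Proof. by case. Qed.

Lemma idealD I x y : is_ideal I -> I x -> I y -> I (x + y).
Proof. by case=> _ addI _; apply: addI. Qed.

Lemma idealMl I a x : is_ideal I -> I x -> I (a * x).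
Proof. by case=> _ _ mulI; apply: mulI. Qed.

Lemma idealMr I a x : is_ideal I -> I x -> I (x * a).
Proof. by rewrite mulrC; apply: idealMl. Qed.

Lemma idealDr I x y : is_ideal I -> I y -> I (x + y) <-> I x.
Proof.
move=> II Iy; split=> [Ixy | Ix]; last exact: idealD.
have -> : x = (x + y) + (-1) * y by ring.
by apply: idealD => //; apply: idealMl.
Qed.

Lemma idealDl I x y : is_ideal I -> I x -> I (x + y) <-> I y.
Proof. by rewrite addrC; apply: idealDr. Qed.

Lemma proper_ideal_unitN I e : is_ideal I -> ~ I 1 -> is_unit e -> ~ I e.
Proof. by move=> II nI1 [f ef] Ie; apply: nI1; rewrite -ef; apply: idealMr. Qed.

Lemma gen_ideal_ideal S : is_ideal (gen_ideal S).
Proof.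
split=> [I II _ | x y Sx Sy I II SI | a x Sx I II SI]; first exact: ideal0.
  by apply: idealD (Sx I II SI) (Sy I II SI).
by apply: idealMl (Sx I II SI).
Qed.

Lemma sub_gen_ideal S : subsetA S (gen_ideal S).
Proof. by move=> x Sx I _; apply. Qed.

Lemma gen_ideal_min S I : is_ideal I -> subsetA S I -> subsetA (gen_ideal S) I.
Proof. by move=> II SI x; apply. Qed.

Lemma maximal_ideal_prime M : is_maximal_ideal M -> is_prime_ideal M.
Proof.
case=> MI nM1 Mmax; split=> // a b Mab.
case: (classic (M a)) => [|nMa]; [by left | right].
pose J x := exists m r, M m /\ x = m + r * a.
have JI : is_ideal J.
  split; first by exists 0, 0; split; [exact: ideal0 | ring].
    move=> _ _ [m1 [r1 [Mm1 ->]]] [m2 [r2 [Mm2 ->]]].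
    by exists (m1 + m2), (r1 + r2); split; [exact: idealD | ring].
  move=> c _ [m1 [r1 [Mm1 ->]]].
  by exists (c * m1), (c * r1); split; [exact: idealMl | ring].
have MJ : subsetA M J by move=> x Mx; exists x, 0; split=> //; ring.
case: (classic (J 1)) => [[m [r [Mm one]]] | nJ1].
  have -> : b = b * m + r * (a * b) by rewrite -[b in LHS]mulr1 one; ring.
  by apply: idealD; [|apply: idealMl..].
by case: nMa; apply: Mmax JI MJ nJ1 _ _; exists 0, 1; split; [exact: ideal0 | ring].
Qed.

Lemma maximal_ideal_jprime M : is_maximal_ideal M -> is_jprime M.
Proof.
move=> Mmax; split; first exact: maximal_ideal_prime.
by move=> x; split=> [Mx M' _ /(_ x Mx) | /(_ M Mmax)]; last apply.
Qed.

Definition maxV S : (A -> Prop) -> Prop := fun M => is_maximal_ideal M /\ subsetA S M.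

Definition ideal_of C : A -> Prop := fun x => forall M, C M -> M x.

Lemma jprime_sub_maximal P : is_jprime P -> exists M, maxV P M.
Proof.
case=> -[_ nP1 _] jP; apply: NNPP => none; apply/nP1/jP => M Mmax PM.
by case: none; exists M.
Qed.

Lemma ideal_of_jprime C :
  (forall M, C M -> is_maximal_ideal M) -> (exists M, C M) ->
  (forall a b, ideal_of C (a * b) -> ideal_of C a \/ ideal_of C b) ->
  is_jprime (ideal_of C).
Proof.
move=> C_max [M0 CM0] prime; split; last first.
  move=> x; split=> [Cx M _ CM | jx M CM]; first exact: CM.
  by apply: jx (C_max M CM) _ => y; apply.
split=> //; last by move=> CM1; case: (C_max M0 CM0) => _ nM01 _; exact: nM01 (CM1 M0 CM0).
split=> [M CM | x y Cx Cy M CM | a x Cx M CM]; have [MI _ _] := C_max M CM.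
- exact: ideal0 MI.
- exact: idealD MI (Cx M CM) (Cy M CM).
- exact: idealMl MI (Cx M CM).
Qed.

Lemma max_closedE C : max_closed C -> forall M, C M <-> maxV (ideal_of C) M.
Proof.
case=> S CE M; split=> [CM | [Mmax sub]].
  by split; [case/CE: CM | move=> x; apply].
by apply/CE; split=> // s Ss; apply: sub => M' /CE [_]; apply.
Qed.

Lemma max_closedI C x : max_closed C -> max_closed (fun M => C M /\ M x).
Proof.
case=> S CE; exists (fun y => S y \/ y = x) => M; split.
  by case=> /CE [Mmax SM] Mx; split=> // y [/SM | ->].
by case=> Mmax SxM; split; [apply/CE; split=> // y Sy | ]; apply: SxM; [left | right].
Qed.

Lemma jprime_ideal_of_sub P C :
  is_jprime P -> subset_of (maxV P) C -> subsetA (ideal_of C) P.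
Proof. by case=> _ jP PC x Cx; apply/jP => M Mmax PM; exact: Cx (PC M (conj Mmax PM)). Qed.

Lemma maxV_sub_closed P C :
  max_closed C -> subsetA (ideal_of C) P -> subset_of (maxV P) C.
Proof. by move=> C_cl CP M [Mmax PM]; apply/(max_closedE C_cl); split=> // x /CP /PM. Qed.

Lemma jprime_maxV_sub P S : is_jprime P -> subset_of (maxV P) (maxV S) <-> subsetA S P.
Proof.
move=> jP; split=> [PS x Sx | SP M [Mmax PM]]; last by split=> // x /SP /PM.
by apply: (jprime_ideal_of_sub jP PS) => M [_]; apply.
Qed.

Lemma jprime_maxV_split P C1 C2 :
  is_jprime P -> max_closed C1 -> max_closed C2 ->
  subset_of (maxV P) (fun M => C1 M \/ C2 M) ->
  subset_of (maxV P) C1 \/ subset_of (maxV P) C2.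
Proof.
move=> jP C1_cl C2_cl cover; apply: NNPP => /not_or_and [not1 not2].
have [a [C1a nPa]] := not_subset_exists (fun sub => not1 (maxV_sub_closed C1_cl sub)).
have [b [C2b nPb]] := not_subset_exists (fun sub => not2 (maxV_sub_closed C2_cl sub)).
have [[PI _ Pprime] _] := jP.
have: P (a * b).
  apply: (jprime_ideal_of_sub jP (C := maxV P)) => // M PM.
  have [[MI _ _] _] := PM.
  by case: (cover M PM) => [/C1a | /C2b]; [apply: idealMr | apply: idealMl].
by case/Pprime.
Qed.

Definition jprime_cover C m Q :=
  (forall k, (k < m)%N -> is_jprime (Q k) /\ subset_of (maxV (Q k)) C) /\
  (forall P, is_jprime P -> subset_of (maxV P) C -> dominated m Q P).

Lemma jprime_cover0 C Q : (forall M, ~ C M) -> jprime_cover C 0 Q.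
Proof.
move=> C_empty; split=> // P jP PC; have [M PM] := jprime_sub_maximal jP.
by case: (C_empty M); apply: PC.
Qed.

Lemma jprime_cover_ideal_of C :
  max_closed C -> is_jprime (ideal_of C) -> jprime_cover C 1 (fun=> ideal_of C).
Proof.
move=> C_cl jC; split=> [k _ | P jP PC]; first by split=> // M /(max_closedE C_cl).
by exists 0%N; split=> //; apply: jprime_ideal_of_sub.
Qed.

Lemma jprime_cover_union C C1 C2 m1 m2 Q1 Q2 :
  max_closed C1 -> max_closed C2 -> subset_of C1 C -> subset_of C2 C ->
  subset_of C (fun M => C1 M \/ C2 M) ->
  jprime_cover C1 m1 Q1 -> jprime_cover C2 m2 Q2 ->
  jprime_cover C (m1 + m2) (catf m1 Q1 Q2).
Proof.
move=> C1_cl C2_cl C1C C2C cover [memb1 dom1] [memb2 dom2]; split.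
  apply: (catf_ind (R := fun P => is_jprime P /\ subset_of (maxV P) C)).
    by move=> k /memb1 [jQ QC]; split=> // M /QC; apply: C1C.
  by move=> k /memb2 [jQ QC]; split=> // M /QC; apply: C2C.
move=> P jP PC; apply: dominated_catf.
have [PC1 | PC2] := jprime_maxV_split jP C1_cl C2_cl (fun M PM => cover M (PC M PM)).
  by left; apply: dom1.
by right; apply: dom2.
Qed.

(* Either the ideal of C is prime, or C is the union of the strictly smaller
   closed sets C /\ V(a) and C /\ V(b). *)
Lemma max_closed_jprime_cover :
  max_noetherian A -> forall C, max_closed C -> exists m Q, jprime_cover C m Q.
Proof.
move=> noeth; apply: (noetherian_ind noeth) => C C_cl IH.
case: (classic (exists M, C M)) => [C_ne | C_empty]; last first.
  by exists 0%N, (fun _ _ => True); apply: jprime_cover0 => M CM; apply: C_empty; exists M.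
have C_max M : C M -> is_maximal_ideal M by case/(max_closedE C_cl).
case: (classic (forall a b, ideal_of C (a * b) -> ideal_of C a \/ ideal_of C b)).
  by move=> prime; exists 1%N, (fun=> ideal_of C); apply/jprime_cover_ideal_of/ideal_of_jprime.
move=> not_prime.
have [a [b [Cab nCa nCb]]] :
    exists a b, [/\ ideal_of C (a * b), ~ ideal_of C a & ~ ideal_of C b].
  apply: NNPP => none; apply: not_prime => a b Cab; apply: NNPP => nCab.
  by apply: none; exists a, b; split=> // ?; apply: nCab; [left | right].
have shrink x : ~ ideal_of C x -> strict_subset (fun M => C M /\ M x) C.
  move=> nCx; split=> [M [] // | ]; have [M [CM nMx]] := not_subset_exists nCx.
  by exists M; split=> // -[].
have [m1 [Q1 cov1]] := IH _ (max_closedI a C_cl) (shrink a nCa).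
have [m2 [Q2 cov2]] := IH _ (max_closedI b C_cl) (shrink b nCb).
exists (m1 + m2)%N, (catf m1 Q1 Q2).
apply: jprime_cover_union (max_closedI a C_cl) (max_closedI b C_cl) _ _ _ cov1 cov2.
- by move=> M [].
- by move=> M [].
move=> M CM; have [_ _ prime] := maximal_ideal_prime (C_max M CM).
by case: (prime a b (Cab M CM)) => ?; [left | right].
Qed.

Lemma minimal_jprimes_over S : max_noetherian A -> exists m Q,
  [/\ forall k, (k < m)%N -> is_jprime (Q k) /\ subsetA S (Q k),
      forall P, is_jprime P -> subsetA S P -> dominated m Q P
    & pairwise_incomparable m Q].
Proof.
move=> noeth; have S_cl : max_closed (maxV S) by exists S.
have [m0 [Q0 [memb dom]]] := max_closed_jprime_cover noeth S_cl.
have [m [Q [membQ domQ inc]]] :=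
  prune_family (R := fun P => is_jprime P /\ subset_of (maxV P) (maxV S)) memb.
exists m, Q; split=> // [k /membQ [jQ QS] | P jP SP].
  by split=> //; apply/(jprime_maxV_sub _ jQ).
by apply/domQ/dom => //; apply/(jprime_maxV_sub _ jP).
Qed.

Lemma prime_avoid_point m Q k :
  (forall i, (i < m)%N -> is_prime_ideal (Q i)) -> pairwise_incomparable m Q ->
  (k < m)%N -> exists x, ~ Q k x /\ forall j, (j < m)%N -> j <> k -> Q j x.
Proof.
move=> prime inc k_lt; have [Qk_I Qk1 Qk_prime] := prime k k_lt.
suff /(_ m) [x [nQkx Qx]] : forall n, exists x,
    ~ Q k x /\ forall j, (j < n)%N -> (j < m)%N -> j <> k -> Q j x.
  by exists x; split=> // j j_lt; apply: Qx.
elim=> [|n [x [nQkx Qx]]]; first by exists 1.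
case: (classic ((n < m)%N /\ n <> k)) => [[n_lt n_k] | skip].
  have [w [Qnw nQkw]] := not_subset_exists (inc n k n_lt k_lt n_k).
  exists (w * x); split=> [/Qk_prime [] // | j j_lt j_m j_k].
  have [Qj_I _ _] := prime j j_m.
  rewrite ltnS leq_eqVlt in j_lt; case/orP: j_lt => [/eqP j_n | j_lt].
    by subst j; exact: idealMr Qj_I Qnw.
  exact: idealMl Qj_I (Qx j j_lt j_m j_k).
exists x; split=> // j; rewrite ltnS leq_eqVlt => /orP [/eqP j_n | j_lt] j_m j_k.
  by case: skip; rewrite -j_n.
exact: Qx.
Qed.

Lemma prime_separation m Q (tau : nat -> Prop) :
  (forall i, (i < m)%N -> is_prime_ideal (Q i)) -> pairwise_incomparable m Q ->
  exists c, forall k, (k < m)%N -> (tau k <-> ~ Q k c).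
Proof.
move=> prime inc.
suff /(_ m) [c sep] : forall n, exists c,
    forall k, (k < m)%N -> ((k < n)%N /\ tau k <-> ~ Q k c).
  by exists c => k k_lt; apply: iff_trans (sep k k_lt); split=> [|[]].
elim=> [|n [c sep]].
  by exists 0 => k k_lt; split=> [[] // | []]; case: (prime k k_lt) => QI _ _; apply: ideal0.
case: (classic ((n < m)%N /\ tau n)) => [[n_lt tau_n] | skip]; last first.
  exists c => k k_lt; apply: iff_trans (sep k k_lt); split=> -[k_n tau_k] //.
    split=> //; move: k_n; rewrite ltnS leq_eqVlt => /orP [/eqP k_n | //].
    by case: skip; rewrite -k_n.
  by split=> //; apply: ltnW.
have [x [nQnx Qx]] := prime_avoid_point prime inc n_lt.
exists (c + x) => k k_lt; have [QI _ _] := prime k k_lt.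
case: (eqVneq k n) => [k_n | /eqP k_n].
  subst k; have Qnc : Q n c by apply: NNPP; move/(sep n n_lt) => -[]; rewrite ltnn.
  by split=> // _ /(idealDl x QI Qnc).
have Qkx := Qx k k_lt k_n.
rewrite ltnS leq_eqVlt (introF eqP k_n) /=; apply: iff_trans (sep k k_lt) _.
split=> nQc Qcx; apply: nQc; first exact: (idealDr c QI Qkx).1.
exact: (idealDr c QI Qkx).2.
Qed.

Lemma prime_shift_avoid P b c e z :
  is_prime_ideal P -> is_unit e -> ~ P z -> (P b <-> ~ P c) -> ~ P (b + e * c * z).
Proof.
case=> PI nP1 Pprime e_unit nPz bc.
case: (classic (P b)) => [Pb | nPb].
  move=> /(idealDl _ PI Pb) /Pprime [/Pprime [] | //].
    exact: proper_ideal_unitN.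
  exact: bc.1.
have Pc : P c by apply: NNPP => nPc; apply/nPb/bc.2.
by move/(idealDr b PI (idealMr z PI (idealMl e PI Pc))).
Qed.

Definition jheight_ge (i : nat) P := exists Qc, jprime_chain Qc i /\ Qc i = P.

Definition jheight_ge_on S z i :=
  forall P, is_jprime P -> subsetA S P -> ~ P z -> jheight_ge i P.

Lemma jheight_ge0 P : is_jprime P -> jheight_ge 0 P.
Proof. by move=> jP; exists (fun=> P); split=> //; split=> i; case: i. Qed.

Lemma jheight_geS i (Q : A -> Prop) P :
  jheight_ge i Q -> is_jprime P -> strict_subsetA Q P -> jheight_ge i.+1 P.
Proof.
move=> [Qc [[jQc incQc] <-]] jP QcP.
exists (fun j => if (j <= i)%N then Qc j else P); split; last by rewrite ltnn.
split=> j j_lt; first by case: ifP => // j_i; apply: jQc.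
rewrite ltnS in j_lt; rewrite j_lt; case: (ltnP j i) => [j_i | i_j]; first exact: incQc.
by have -> : j = i by apply/eqP; rewrite eqn_leq j_lt.
Qed.

Lemma jheight_ge_on_step S z b i : max_noetherian A -> jheight_ge_on S z i ->
  exists c, forall e, is_unit e ->
    jheight_ge_on (fun x => S x \/ x = b + e * c * z) z i.+1.
Proof.
move=> noeth high.
have [m [Q [QS domQ inc]]] := minimal_jprimes_over S noeth.
have Qprime k : (k < m)%N -> is_prime_ideal (Q k) by case/QS => -[].
have [c sep] := prime_separation (fun k => Q k b) Qprime inc.
exists c => e e_unit P jP SP nPz.
have [k [k_lt QP]] := domQ P jP (fun x Sx => SP x (or_introl Sx)).
have [jQ SQ] := QS k k_lt.
have nQz : ~ Q k z by move/QP.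
apply: (jheight_geS (high _ jQ SQ nQz) jP); split=> //.
exists (b + e * c * z); split; first exact: SP (or_intror erefl).
exact: prime_shift_avoid (Qprime k k_lt) e_unit nQz (sep k k_lt).
Qed.

Lemma gen_ideal_shift (s t : seq A) y x r :
  subsetA (gen_ideal (fun w => w \in y :: s ++ x :: t))
          (gen_ideal (fun w => w \in y :: rcons s (x + r * y) ++ t)).
Proof.
pose G := gen_ideal (fun w => w \in y :: rcons s (x + r * y) ++ t).
have GI : is_ideal G := gen_ideal_ideal _.
have inG w : w \in y :: rcons s (x + r * y) ++ t -> G w by apply: sub_gen_ideal.
apply: (gen_ideal_min (I := G)) => [//| w]; rewrite in_cons mem_cat in_cons.
case/orP=> [w_y | /orP [w_s | /orP [/eqP -> | w_t]]].
- by apply: inG; rewrite in_cons w_y.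
- by apply: inG; rewrite in_cons mem_cat mem_rcons in_cons w_s !orbT.
- have -> : x = (x + r * y) + (- r) * y by ring.
  apply: idealD GI (inG _ _) (idealMl (- r) GI (inG y _)).
    by rewrite in_cons mem_cat mem_rcons mem_head orbT.
  by rewrite mem_head.
- by apply: inG; rewrite in_cons mem_cat w_t !orbT.
Qed.

Lemma afsr_game_win d row z rest acc i :
  max_noetherian A -> dimMax_le_sub2 A d -> (i + size rest)%N = d.-1 ->
  subsetA row (gen_ideal (fun x => x \in z :: acc ++ rest)) ->
  jheight_ge_on (fun x => x \in acc) z i -> afsr_game row z rest acc.
Proof.
move=> noeth dim; elim: rest acc i => [|b rest IH] acc i /= size_i row_gen high.
  move=> M Mmax accM; have [MI _ _] := Mmax.
  have acc_M w : w \in acc -> M w by move=> w_acc; apply: accM; apply: sub_gen_ideal.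
  case: (classic (M z)) => [Mz | nMz]; last first.
    have [Qc [chain _]] := high M (maximal_ideal_jprime Mmax) acc_M nMz.
    by have := dim Qc i chain; lia.
  apply: (gen_ideal_min MI) => x /row_gen; apply: (gen_ideal_min MI) => w.
  by rewrite in_cons cats0 => /orP [/eqP -> | /acc_M].
have [c step] := jheight_ge_on_step b noeth high.
exists c => e e_unit; apply: (IH _ i.+1); first by rewrite addSn -addnS.
  by move=> x /row_gen; apply: gen_ideal_shift.
move=> P jP accP; apply: (step e e_unit P jP) => x [x_acc | ->]; apply: accP.
  by rewrite mem_rcons in_cons x_acc orbT.
by rewrite mem_rcons mem_head.
Qed.

End JSpectrum.

Theorem lemma2 (A : comPzRingType) (d : nat) :
  max_noetherian A -> dimMax_le_sub2 A d -> AFSR A d.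
Proof.
move=> noeth dim bs z size_bs.
apply: (afsr_game_win (acc := [::]) (i := 0%N) noeth dim) => //.
  by move=> x; rewrite mem_rcons; exact: (sub_gen_ideal (S := fun x => x \in z :: bs)).
by move=> P jP _ _; apply: jheight_ge0.
Qed.
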